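(* The transformation $\mathcal{A}_2$ is an Upsilon transformation with dilation measure $\tau(\mathrm{d}u)=a_1(u;1)\mathrm{d}u$; that is, for $\nu\in\mathfrak{M}_L^2(\mathbb{R}^d)$, $\widetilde\nu=\mathcal{A}_2(\nu)$ satisfies $\widetilde\nu(B)=\mathrm{E}[\nu(A^{-1}B)]$ for all Borel $B\subset\mathbb{R}^d$, where $A$ is a random variable with density $a_1(u;1)$.
   Context: A Lévy measure on $\mathbb{R}^d$ is a measure $\nu$ with $\nu(\{0\})=0$ and $\int(1\wedge|x|^2)\nu(\mathrm{d}x)<\infty$; their class is $\mathfrak{M}_L^2(\mathbb{R}^d)$. For $s>0$ set $a_1(r;s)=2\pi^{-1}(s-r^2)^{-1/2}$ for $0<r<s^{1/2}$ and $0$ otherwise; $a_2(r;s)=2\pi^{-1}(s^2-r^2)^{-1/2}$ for $0<r<s$ and $0$ otherwise. $\mathcal{A}_2(\nu)(B)=\int_{\mathbb{R}^d\setminus\{0\}}\nu(\mathrm{d}x)\int_0^\infty a_2(r;|x|)1_B(rx/|x|)\,\mathrm{d}r$. For a measure $\tau$ on $(0,\infty)$, the Upsilon transformation with dilation measure $\tau$ is $\Upsilon_\tau(\nu)(B)=\int_0^\infty\nu(u^{-1}B)\tau(\mathrm{d}u)$, where $u^{-1}B=\{u^{-1}x:x\in B\}$. *)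

From HB Require Import structures.
From mathcomp Require Import all_boot all_order all_algebra.
From mathcomp Require Import all_classical all_reals all_analysis.
Set Implicit Arguments. Unset Strict Implicit. Unset Printing Implicit Defensive.
Import Order.TTheory GRing.Theory Num.Theory.
Import numFieldNormedType.Exports.
Local Open Scope classical_set_scope.
Local Open Scope ring_scope.

Definition Rd (R : realType) (d : nat) :=
  g_sigma_algebraType (@open 'rV[R]_d).

Definition enorm (R : realType) (d : nat) (x : 'rV[R]_d) : R :=
  Num.sqrt (\sum_(i < d) x ord0 i ^+ 2).

Definition a1 (R : realType) (r s : R) : R :=
  if (0 < r) && (r < Num.sqrt s) then 2 / pi * (Num.sqrt (s - r ^+ 2))^-1 else 0.
Definition a2 (R : realType) (r s : R) : R :=
  if (0 < r) && (r < s) then 2 / pi * (Num.sqrt (s ^+ 2 - r ^+ 2))^-1 else 0.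

Definition levy_measure (R : realType) (d : nat)
    (nu : {measure set (Rd R d) -> \bar R}) : Prop :=
  nu [set (0 : 'rV[R]_d)] = 0%E /\
  (\int[nu]_x (Order.min 1 (enorm x ^+ 2))%:E < +oo)%E.

Definition A2 (R : realType) (d : nat)
    (nu : {measure set (Rd R d) -> \bar R}) (B : set (Rd R d)) : \bar R :=
  (\int[nu]_(x in ~` [set (0 : 'rV[R]_d)%R])
     \int[lebesgue_measure]_(r in `[0%R, +oo[%classic)
        ((a2 r (enorm x))%:E *
         (\1_B (r *: ((enorm x)^-1 *: x) : Rd R d)%R)%:E))%E.

Definition dil_inv (R : realType) (d : nat) (u : R) (B : set (Rd R d))
  : set (Rd R d) := [set (u^-1 *: x : 'rV[R]_d) | x in B].

(* Upsilon transformation with dilation measure tau(du) = g(u) du on (0,oo):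
   Upsilon_tau(nu)(B) = \int_0^oo nu(u^{-1} B) tau(du) *)
Definition Upsilon_dens (R : realType) (d : nat) (g : R -> R)
    (nu : {measure set (Rd R d) -> \bar R}) (B : set (Rd R d)) : \bar R :=
  (\int[lebesgue_measure]_(u in `]0%R, +oo[%classic)
     (nu (dil_inv u B) * (g u)%:E)%E)%E.

From HB Require Import structures.
From mathcomp Require Import all_boot all_order all_algebra.
From mathcomp Require Import all_classical all_reals all_analysis.
From mathcomp Require Import measurable_realfun ring lra.
Import Order.TTheory GRing.Theory Num.Theory.
Import numFieldNormedType.Exports.
Local Open Scope classical_set_scope.
Local Open Scope ring_scope.

(* Both sides are the integral of a2(u;1) 1_B(u x) against du (x) nu(dx).
   On the Upsilon side, nu(u^-1 B) = \int 1_B(u x) nu(dx) and a1(u;1) = a2(u;1).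
   On the A2 side, for x <> 0 the substitution r = |x| u turns the inner
   integral into \int a2(u;1) 1_B(u x) du, because |x| a2(|x| u; |x|) = a2(u;1);
   the point x = 0 excluded in A2 is nu-null.  The two iterated integrals agree
   by Tonelli, which applies since a Levy measure is sigma-finite:
   c^2 nu{|x| >= c} <= \int (1 /\ |x|^2) dnu for 0 < c <= 1. *)

Section euclidean_norm.
Context {R : realType} {d : nat}.
Implicit Types x : 'rV[R]_d.

Lemma enorm_ge0 x : 0 <= enorm x.
Proof. exact: sqrtr_ge0. Qed.

Lemma enorm_eq0 x : (enorm x == 0) = (x == 0).
Proof.
apply/idP/eqP => [|->]; last first.
  by rewrite /enorm big1 ?sqrtr0 // => i _; rewrite mxE expr0n.
rewrite sqrtr_eq0 => sum_le0.
have sum0 : \sum_(i < d) x ord0 i ^+ 2 = 0.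
  by apply/eqP; rewrite eq_le sum_le0 sumr_ge0 // => i _; exact: sqr_ge0.
have sq0 := psumr_eq0P (fun i _ => sqr_ge0 (x ord0 i)) sum0.
apply/matrixP => i j; rewrite mxE (ord1 i).
by apply/eqP; rewrite -sqrf_eq0 sq0.
Qed.

Lemma enorm_gt0 x : (0 < enorm x) = (x != 0).
Proof. by rewrite lt_def enorm_eq0 enorm_ge0 andbT. Qed.

Lemma enorm_continuous : continuous (@enorm R d).
Proof.
move=> x; apply: continuous_comp; last exact: sqrt_continuous.
apply: (continuous_big add_continuous) => i _ y.
apply: (@continuous_comp _ _ _ (fun M : 'rV[R]_d => M ord0 i)
  (fun r => r ^+ 2)); first exact: coord_continuous.
exact: exprn_continuous.
Qed.

End euclidean_norm.

Section borel_Rd.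
Context {R : realType} {d : nat}.

Lemma continuous_measurable_Rd (f : 'rV[R]_d -> R) :
  continuous f -> measurable_fun [set: Rd R d] (f : Rd R d -> R).
Proof.
move=> /continuousP cf.
apply: (measurability _ (RGenOpens.measurableE R)).
move=> _ [_ [a [b ->]] <-]; rewrite setTI.
apply: sub_sigma_algebra; apply: cf; exact: interval_open.
Qed.

Lemma measurable_enorm_ge (c : R) :
  measurable ([set x | c <= enorm x] : set (Rd R d)).
Proof.
have -> : ([set x | c <= enorm x] : set (Rd R d)) = @enorm R d @^-1` `[c, +oo[.
  by apply/seteqP; split => x /=; rewrite in_itv /= andbT.
rewrite -[X in measurable X]setTI.
exact: continuous_measurable_Rd (@enorm_continuous R d) _ _ _.
Qed.

Lemma measurable_set0_Rd : measurable ([set 0] : set (Rd R d)).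
Proof.
have -> : ([set 0] : set (Rd R d)) = @enorm R d @^-1` [set 0].
  apply/seteqP; split => x /= => [->|/eqP]; last by rewrite enorm_eq0 => /eqP.
  by apply/eqP; rewrite enorm_eq0.
rewrite -[X in measurable X]setTI.
exact: continuous_measurable_Rd (@enorm_continuous R d) _ _ (measurable_set1 _).
Qed.

Lemma exists_rat_ball (x r : R) : 0 < r -> exists q : rat, ball x r (ratr q).
Proof.
move=> r0; have : x - r < x + r by rewrite ltrBlDr -addrA ltrDl addr_gt0.
move=> /rat_in_itvoo [q]; rewrite in_itv /= => /andP[xrq qxr].
by exists q; rewrite -ball_normE /= ltr_norml; apply/andP; split; lra.
Qed.

Lemma exists_ratmx_ball (x : 'rV[R]_d) (r : R) : 0 < r ->
  exists y : 'rV[rat]_d, ball x r (map_mx ratr y).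
Proof.
move=> r0; have /fin_all_exists [q xq] : forall j : 'I_d,
    exists q : rat, ball (x ord0 j) r (ratr q).
  by move=> j; exact: exists_rat_ball.
by exists (\row_j q j); split => // i j; rewrite !mxE (ord1 i).
Qed.

(* Open sets of R x R^d are countable unions of products of rational balls,
   hence lie in the product of the Borel sigma-algebras. *)
Lemma open_measurable_prod_Rd (O : set (R * 'rV[R]_d)) :
  open O -> measurable (O : set (R * Rd R d)).
Proof.
move=> oO.
pose box (t : rat * 'rV[rat]_d * rat) : set (R * Rd R d) :=
  ball (ratr t.1.1 : R) (ratr t.2) `*`
  ball (map_mx ratr t.1.2 : 'rV[R]_d) (ratr t.2).
pose F t := if `[< box t `<=` O >] then box t else set0.
have -> : O = \bigcup_t F t.
  apply/seteqP; split; last first.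
    by move=> p [t _]; rewrite /F; case: asboolP => // boxO; exact: boxO.
  move=> [u x] /oO /nbhs_ballP [e /= e0 ballO].
  have /rat_in_itvoo [r] : 0 < e / 2 by rewrite divr_gt0.
  rewrite in_itv /= => /andP[r0 re].
  have [q uq] := exists_rat_ball u _ r0.
  have [y xy] := exists_ratmx_ball x _ r0.
  have boxO : box (q, y, r) `<=` O.
    move=> [v z] [/= qv yz]; apply: ballO; split => /=.
      apply: (le_ball (e1 := ratr r + ratr r)); first lra.
      exact: ball_triangle uq qv.
    apply: (le_ball (e1 := ratr r + ratr r)); first lra.
    exact: ball_triangle xy yz.
  exists (q, y, r) => //; rewrite /F; case: asboolP => // _.
  by split => /=; apply: ball_sym.
apply: countable_bigcupT_measurable; first exact: countableP.
move=> t; rewrite /F; case: asboolP => _ //; apply: measurableX.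
  by apply: open_measurable; exact: ball_open.
by apply: sub_sigma_algebra; exact: ball_open.
Qed.

Lemma scale_measurable_Rd :
  measurable_fun [set: R * Rd R d]
    (fun z : R * Rd R d => (z.1 *: z.2 : Rd R d)).
Proof.
apply: (@measurability _ _ _ (Rd R d) _ _ (@open 'rV[R]_d) erefl) => //.
move=> _ [U oU <-]; rewrite setTI.
apply: open_measurable_prod_Rd.
exact: (continuousP _).1 (@scale_continuous R _) _ oU.
Qed.

Lemma scalel_measurable_Rd (u : R) :
  measurable_fun [set: Rd R d] (fun x : Rd R d => (u *: x : Rd R d)).
Proof.
exact: measurableT_comp scale_measurable_Rd
  (measurable_fun_pair (measurable_cst u) (@measurable_id _ (Rd R d) setT)).
Qed.

Lemma scaler_measurable_Rd (y : Rd R d) :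
  measurable_fun [set: R] (fun r : R => (r *: y : Rd R d)).
Proof.
exact: measurableT_comp scale_measurable_Rd
  (measurable_fun_pair (@measurable_id _ R setT) (measurable_cst y)).
Qed.

End borel_Rd.

Section levy_measure_sigma_finite.
Context (R : realType) (d : nat) (nu : {measure set (Rd R d) -> \bar R}).
Hypothesis nuL : levy_measure nu.

Lemma levy_measure_enorm_ge_lty (c : R) : 0 < c -> c <= 1 ->
  (nu [set x | (c <= enorm x)%R] < +oo)%E.
Proof.
move=> c0 c1; have [_ int_lty] := nuL.
set A : set (Rd R d) := [set x | c <= enorm x].
have mA : measurable A by exact: measurable_enorm_ge.
have chebyshev :
    ((c ^+ 2)%:E * nu A <= \int[nu]_x (Order.min 1 (enorm x ^+ 2))%:E)%E.
  rewrite -[X in nu X](setIT A) -integral_indic // -ge0_integralZl_EFin //;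
    last by rewrite exprn_ge0 // ltW.
  - apply: ge0_le_integral => //.
    + by move=> x _; rewrite mule_ge0 // lee_fin // exprn_ge0 // ltW.
    + by apply/measurable_EFinP/measurable_funM => //; exact: measurable_indic.
    + apply/measurable_EFinP; have menorm := continuous_measurable_Rd _
        (@enorm_continuous R d).
      have mmin := @measurable_minr _ (Rd R d) _ setT (cst 1)
        (fun x => enorm x ^+ 2) (measurable_cst _) (measurable_funX 2 menorm).
      exact: mmin.
    + move=> x _; rewrite indicE -EFinM lee_fin.
      case: (boolP (x \in A)) => [|_]; last first.
        by rewrite mulr0 le_min ler01 exprn_ge0 // enorm_ge0.
      rewrite mulr1 inE /A /= => cx; rewrite le_min expr_le1 ?(ltW c0) // c1.
      by rewrite lerXn2r ?nnegrE ?enorm_ge0 ?(ltW c0).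
  - by apply/measurable_EFinP; exact: measurable_indic.
rewrite ltNge leye_eq; apply/negP => /eqP nuA; move: chebyshev.
rewrite nuA mulry gtr0_sg ?exprn_gt0 // mul1e leye_eq => /eqP int_y.
by rewrite int_y ltxx in int_lty.
Qed.

Lemma levy_measure_sigma_finite : sigma_finite setT nu.
Proof.
have [nu0 _] := nuL.
pose c n : R := n.+1%:R^-1.
have c_gt0 n : 0 < c n by rewrite invr_gt0.
have c_le1 n : c n <= 1 by rewrite invf_le1 // ler1n.
exists (fun n => [set 0] `|` [set x | c n <= enorm x]).
  apply/seteqP; split => // x _.
  have [->|x0] := eqVneq x 0; first by exists 0%N => //; left.
  have ex : 0 < enorm x by rewrite enorm_gt0.
  exists (Num.truncn (enorm x)^-1) => //; right => /=.
  rewrite /c -[leRHS]invrK ltW // ltf_pV2 ?posrE ?invr_gt0 //.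
  exact: truncnS_gt.
move=> n; have m0 := @measurable_set0_Rd R d.
have mc : measurable ([set x | c n <= enorm x] : set (Rd R d)).
  exact: measurable_enorm_ge.
split; first exact: measurableU.
apply: le_lt_trans (measureU2 _ m0 mc) _.
by rewrite [X in (X + _)%E]nu0 add0e levy_measure_enorm_ge_lty.
Qed.

End levy_measure_sigma_finite.

Definition sfinite_of_sigma_finite {d} {T : measurableType d} {R : realType}
    {mu : {measure set T -> \bar R}} (mu_sf : sigma_finite setT mu) :
  {sfinite_measure set T -> \bar R} :=
  HB.pack_for (SFiniteMeasure.type T R) (Measure.sort mu) (Measure.class mu)
    (isSFinite.Build _ _ _ _ (sfinite_measure_sigma_finite mu_sf)).

Section lebesgue_dilation.
Context {R : realType} (c : R).
Hypothesis c_gt0 : 0 < c.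

Let mulc_measurable : measurable_fun [set: measurableTypeR R]
  (fun u : measurableTypeR R => c * u : measurableTypeR R).
Proof. by apply: continuous_measurable_fun; exact: mulrl_continuous. Qed.

(* The pushforward measure instance takes the measurability proof as an
   argument, so it cannot be inferred and is named explicitly. *)
Let dilation : {measure set measurableTypeR R -> \bar R} :=
  measure_function_pushforward__canonical__measure_function_Measure
    lebesgue_measure mulc_measurable.

Let scaled_dilation : {measure set measurableTypeR R -> \bar R} :=
  mscale (NngNum (ltW c_gt0)) dilation.

Lemma lebesgue_measure_dilation (A : set R) : measurable A ->
  lebesgue_measure A =
  (c%:E * lebesgue_measure ((fun u : R => (c * u)%R) @^-1` A))%E.
Proof.
move=> mA.
apply: (lebesgue_measure_unique (mu := scaled_dilation)) => //.
move=> _ [[a b] _ <-] /=.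
rewrite /mscale /= /pushforward.
have -> : (fun u => c * u) @^-1` `]a, b]%classic = `](a / c), (b / c)]%classic.
  by apply/seteqP; split => x /=; rewrite !in_itv /= ltr_pdivrMr // ler_pdivlMr
    // [x * c]mulrC.
rewrite !lebesgue_measure_itv /= !lte_fin ltr_pM2r ?invr_gt0 //.
case: ifPn => // ab; last by rewrite mule0.
by rewrite -EFinD -EFinM -mulrBl mulrCA divff ?gt_eqF // mulr1.
Qed.

Lemma ge0_integral_dilation (f : R -> \bar R) :
  measurable_fun [set: R] f -> (forall x, (0 <= f x)%E) ->
  (\int[lebesgue_measure]_x f x =
   c%:E * \int[lebesgue_measure]_u f (c * u)%R)%E.
Proof.
move=> mf f0.
rewrite (eq_measure_integral scaled_dilation); last first.
  by move=> A mA _; exact: lebesgue_measure_dilation.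
by rewrite ge0_integral_mscale //= ge0_integral_pushforward.
Qed.

End lebesgue_dilation.

Section arcsine_densities.
Context {R : realType}.
Implicit Types r s u : R.

Lemma a1_1 u : a1 u 1 = a2 u 1.
Proof. by rewrite /a1 /a2 sqrtr1 expr1n. Qed.

Lemma a2_ge0 r s : 0 <= a2 r s.
Proof.
rewrite /a2; case: ifPn => // _; apply: mulr_ge0.
  by rewrite divr_ge0 ?pi_ge0.
by rewrite invr_ge0 sqrtr_ge0.
Qed.

Lemma a2_out r s : ~~ ((0 < r) && (r < s)) -> a2 r s = 0.
Proof. by rewrite /a2 => /negbTE ->. Qed.

Lemma measurable_a2 s : measurable_fun [set: R] (fun r => a2 r s).
Proof.
have itv_s : (fun r => (0 < r) && (r < s)) @^-1` [set true] = `]0, s[%classic.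
  by apply/seteqP; split => x /=; rewrite in_itv.
apply: measurable_fun_if => //.
  by apply: (measurable_fun_bool true); rewrite setTI itv_s.
rewrite setTI itv_s; apply: open_continuous_measurable_fun.
  exact: interval_open.
move=> x; rewrite inE /= in_itv /= => /andP[x0 xs].
apply: cvgM; first exact: cvg_cst.
apply: cvgV; first by rewrite sqrtr_eq0 -ltNge subr_gt0 !expr2; nra.
apply: (@continuous_comp _ _ _ (fun r => s ^+ 2 - r ^+ 2) Num.sqrt x).
  by apply: cvgB; [exact: cvg_cst|exact: exprn_continuous].
exact: sqrt_continuous.
Qed.

Lemma a2_dilation c u : 0 < c -> c * a2 (c * u) c = a2 u 1.
Proof.
move=> c0; rewrite /a2 pmulr_rgt0 // -[X in c * u < X]mulr1 ltr_pM2l //.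
case: ifPn => [/andP[u0 u1]|_]; last by rewrite mulr0.
have -> : c ^+ 2 - (c * u) ^+ 2 = c ^+ 2 * (1 - u ^+ 2) by ring.
rewrite sqrtrM ?exprn_ge0 ?ltW // sqrtr_sqr ger0_norm ?ltW // expr1n.
by rewrite invfM mulrCA mulVKf ?gt_eqF.
Qed.

Lemma ge0_integral_a2_dilation (c : R) (h : R -> \bar R) : 0 < c ->
  measurable_fun [set: R] h -> (forall r, (0 <= h r)%E) ->
  (\int[lebesgue_measure]_(r in `[0%R, +oo[) ((a2 r c)%:E * h r) =
   \int[lebesgue_measure]_u ((a2 u 1)%:E * h (c * u)%R))%E.
Proof.
move=> c0 mh h0.
have f0 r : (0 <= (a2 r c)%:E * h r)%E by rewrite mule_ge0 // lee_fin a2_ge0.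
have mf : measurable_fun [set: R] (fun r => (a2 r c)%:E * h r)%E.
  apply: emeasurable_funM => //.
  by apply/measurable_EFinP; exact: measurable_a2.
transitivity (\int[lebesgue_measure]_r ((a2 r c)%:E * h r))%E.
  rewrite integral_mkcond; apply: eq_integral => r _.
  rewrite patchE; case: ifPn => // r_neg.
  rewrite a2_out ?mul0e //; move: r_neg; rewrite notin_setE /= in_itv /= andbT.
  by move=> /negP; rewrite -ltNge => /lt_gtF ->.
rewrite (ge0_integral_dilation _ c0 _ mf f0) -ge0_integralZl_EFin //;
  [|exact: measurableT_comp mf _|exact: ltW].
by apply: eq_integral => u _; rewrite muleA -EFinM a2_dilation.
Qed.

End arcsine_densities.

Lemma dil_invE {R : realType} {d : nat} (u : R) (B : set (Rd R d)) : u != 0 ->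
  dil_inv u B = (fun x : Rd R d => (u *: x : Rd R d)) @^-1` B.
Proof.
move=> u0; apply/seteqP; split => x /=.
  by move=> [y By <-]; rewrite scalerA mulfV // scale1r.
by move=> Bux; exists (u *: x) => //; rewrite scalerA mulVf // scale1r.
Qed.

Section A2_as_Upsilon.
Context {R : realType} {d : nat} (nu : {measure set (Rd R d) -> \bar R}).
Variable B : set (Rd R d).
Hypothesis mB : measurable B.

Let indic_scale (u : R) (x : Rd R d) : \bar R := (\1_B (u *: x : Rd R d))%:E.

Let measurable_indic_scalel (u : R) :
  measurable_fun [set: Rd R d] (indic_scale u).
Proof.
apply/measurable_EFinP.
exact: measurableT_comp (measurable_indic mB) (scalel_measurable_Rd u).
Qed.

Let measurable_indic_scaler (y : Rd R d) :
  measurable_fun [set: R] (indic_scale ^~ y).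
Proof.
apply/measurable_EFinP.
exact: measurableT_comp (measurable_indic mB) (scaler_measurable_Rd y).
Qed.

Let F (z : R * Rd R d) : \bar R := ((a2 z.1 1)%:E * indic_scale z.1 z.2)%E.

Let F_ge0 z : (0 <= F z)%E.
Proof. by rewrite mule_ge0 // lee_fin ?a2_ge0. Qed.

Let measurable_F : measurable_fun [set: R * Rd R d] F.
Proof.
apply: emeasurable_funM; apply/measurable_EFinP.
  exact: measurableT_comp (measurable_a2 1) measurable_fst.
exact: measurableT_comp (measurable_indic mB) scale_measurable_Rd.
Qed.

Lemma Upsilon_a1E : Upsilon_dens (fun u => a1 u 1) nu B =
  (\int[lebesgue_measure]_u \int[nu]_x F (u, x))%E.
Proof.
rewrite /Upsilon_dens integral_mkcond; apply: eq_integral => u _.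
rewrite patchE; case: ifPn => [|u_out].
  rewrite inE /= in_itv /= andbT => u0.
  rewrite /F /= (ge0_integralZl _ measurableT (measurable_indic_scalel u));
    [|by move=> x _; rewrite lee_fin|by rewrite lee_fin a2_ge0].
  rewrite a1_1 muleC dil_invE ?gt_eqF // -[X in nu X]setIT -integral_indic //.
  by rewrite -[X in measurable X]setTI; exact: scalel_measurable_Rd.
have a2u0 : a2 u 1 = 0.
  apply: a2_out; apply: contra u_out => /andP[u0 _].
  by rewrite inE /= in_itv /= andbT.
by under eq_integral do rewrite /F a2u0 mul0e; rewrite integral0.
Qed.

Lemma A2E : nu [set (0 : 'rV[R]_d)] = 0%E ->
  A2 nu B = (\int[nu]_x \int[lebesgue_measure]_u F (u, x))%E.
Proof.
move=> nu0.
have mIF := measurable_fun_fubini_tonelli_G (m1 := lebesgue_measure) F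
  measurable_F F_ge0.
rewrite [RHS](ge0_negligible_integral measurable_set0_Rd measurableT mIF);
  last 2 first.
- by move=> x _; exact: integral_ge0.
- exact: nu0.
rewrite setTD; apply: eq_integral => x; rewrite inE /= => /eqP x0.
have x_gt0 : 0 < enorm x by rewrite enorm_gt0.
rewrite (ge0_integral_a2_dilation _ _ x_gt0
  (measurable_indic_scaler ((enorm x)^-1 *: x))); last first.
  by move=> r; rewrite lee_fin.
apply: eq_integral => u _.
by rewrite /F /indic_scale /= scalerA mulrAC mulfV ?gt_eqF // mul1r.
Qed.

Lemma A2_Upsilon_a1 : nu [set (0 : 'rV[R]_d)] = 0%E -> sigma_finite setT nu ->
  A2 nu B = Upsilon_dens (fun u => a1 u 1) nu B.
Proof.
move=> nu0 nu_sf; rewrite A2E // Upsilon_a1E.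
pose nu' := sfinite_of_sigma_finite nu_sf.
(* nu' is nu equipped with its s-finite structure: equal by conversion. *)
transitivity (\int[nu']_x \int[lebesgue_measure]_u F (u, x))%E => //.
exact: esym (sfinite_Fubini lebesgue_measure nu' F F_ge0 measurable_F).
Qed.

End A2_as_Upsilon.

Theorem corollary2p14 (R : realType) (d : nat)
    (nu : {measure set (Rd R d) -> \bar R}) :
  levy_measure nu ->
  forall B : set (Rd R d), measurable B ->
    A2 nu B = Upsilon_dens (fun u => a1 u 1) nu B.
Proof.
move=> nuL B mB; have [nu0 _] := nuL.
by apply: A2_Upsilon_a1 => //; exact: levy_measure_sigma_finite.
Qed.
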